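(* Let $\mathbb{F}$ be a field, let $n\ge 1$, and let $B$ be a nonzero matrix in $M_n(\mathbb{F})$. Then $B$ is strongly independent over $\mathbb{F}$ if and only if the characteristic polynomial $P_B(t)=\det(tI_n-B)$ is irreducible in $\mathbb{F}[t]$.
   Context: An $n$-tuple $(B_1,\dots,B_n)$ of matrices in $M_n(\mathbb{F})$ is called strongly independent over $\mathbb{F}$ if for every nonzero column vector $v\in\mathbb{F}^{n\times 1}$, the vectors $B_1v,\dots,B_nv$ are linearly independent over $\mathbb{F}$. A nonzero matrix $B\in M_n(\mathbb{F})$ is called strongly independent over $\mathbb{F}$ if the $n$-tuple $(I_n,B,B^2,\dots,B^{n-1})$ is strongly independent over $\mathbb{F}$. *)

From mathcomp Require Import all_boot all_order all_algebra.
Set Implicit Arguments. Unset Strict Implicit. Unset Printing Implicit Defensive.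
Import GRing.Theory.
Local Open Scope ring_scope.

Definition lin_indep (F : fieldType) (m k : nat) (w : 'I_k -> 'cV[F]_m) : Prop :=
  forall c : 'I_k -> F, \sum_(i < k) c i *: w i = 0 -> forall i, c i = 0.

Definition strongly_independent_tuple (F : fieldType) (n : nat)
    (Bs : 'I_n -> 'M[F]_n) : Prop :=
  forall v : 'cV[F]_n, v != 0 -> lin_indep (fun i => Bs i *m v).

Definition strongly_independent_mx (F : fieldType) (n : nat) (B : 'M[F]_n.+1) : Prop :=
  B != 0 /\ strongly_independent_tuple (fun i : 'I_n.+1 => B ^+ i).

From mathcomp Require Import all_boot all_order all_algebra.
From mathcomp Require Import zify.
Set Implicit Arguments. Unset Strict Implicit. Unset Printing Implicit Defensive.
Import GRing.Theory.
Local Open Scope ring_scope.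

(* A linear relation among [v, Bv, ..., B^n v] is a polynomial [p] of degree at
   most [n] with [p(B) v = 0], so strong independence says that no nonzero
   vector is killed by a nonzero polynomial of degree [< deg P_B].
   If [P_B] is irreducible, such a [p] is coprime to [P_B]; by Bezout and
   Cayley-Hamilton [p(B)] is then invertible, so [p(B) v = 0] forces [v = 0].
   Conversely, if [q] divides [P_B = r q], then [r(B) q(B) = 0] by
   Cayley-Hamilton: either [q(B) = 0] kills every vector, so [deg q >= deg P_B],
   or [r(B)] kills a nonzero vector [q(B) v], so [deg r >= deg P_B] and [q] is
   constant. *)

Lemma exists_mulmx_neq0 (R : nzRingType) m n (A : 'M[R]_(m, n)) :
  A != 0 -> exists v : 'cV[R]_n, A *m v != 0.
Proof.
move=> A0; case: (pickP (fun j : 'I_n => A *m (delta_mx j 0 : 'cV[R]_n) != 0)).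
  by move=> j; exists (delta_mx j 0).
move=> noCol.
case/eqP: A0; apply/matrixP => i j.
by have /negbFE/eqP/colP/(_ i) := noCol j; rewrite -colE !mxE.
Qed.

Section StronglyIndependentPowers.

Variables (F : fieldType) (n : nat) (B : 'M[F]_n.+1).

Lemma sum_scale_powers_mulmx k (c : nat -> F) (v : 'cV[F]_n.+1) :
  \sum_(i < k) c i *: (B ^+ i *m v) = horner_mx B (\poly_(i < k) c i) *m v.
Proof.
rewrite poly_def rmorph_sum /= mulmx_suml; apply: eq_bigr => i _.
by rewrite linearZ /= rmorphXn /= horner_mx_X scalemxAl.
Qed.

Lemma strongly_independent_powersP :
  strongly_independent_tuple (fun i : 'I_n.+1 => B ^+ i) <->
  (forall v : 'cV[F]_n.+1, v != 0 -> forall p : {poly F},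
     (size p <= n.+1)%N -> horner_mx B p *m v = 0 -> p = 0).
Proof.
split=> [SI v v0 p sp pBv | annih v v0 c sum_c0].
  have := SI v v0 (fun i => p`_i).
  rewrite sum_scale_powers_mulmx -/(take_poly _ p) take_poly_id // => /(_ pBv).
  move=> coefs0; apply/polyP => i; rewrite coef0.
  have [lt_in | le_ni] := ltnP i n.+1; first exact: (coefs0 (Ordinal lt_in)).
  by rewrite nth_default // (leq_trans sp le_ni).
set p := \poly_(i < n.+1) c (inord i).
have p0 : p = 0.
  apply: (annih v v0 _ (size_poly _ _)); rewrite -sum_scale_powers_mulmx -[RHS]sum_c0.
  by apply: eq_bigr => i _; rewrite inord_val.
move=> i; have := coef_poly n.+1 (c \o inord) i.
by rewrite -/p p0 coef0 ltn_ord /= inord_val.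
Qed.

Lemma coprimep_char_poly_unitmx (p : {poly F}) :
  coprimep p (char_poly B) -> horner_mx B p \in unitmx.
Proof.
case/Bezout_eq1_coprimepP => [[u w]] /= /(congr1 (horner_mx B)).
rewrite rmorphD !rmorphM /= Cayley_Hamilton mulr0 addr0 rmorph1 => uBpB1.
by case: (mulmx1_unit uBpB1).
Qed.

Lemma irreducible_char_poly_strongly_independent :
  irreducible_poly (char_poly B) ->
  strongly_independent_tuple (fun i : 'I_n.+1 => B ^+ i).
Proof.
move=> irr; apply/strongly_independent_powersP => v v0 p sp pBv.
apply: contraTeq v0 => p0; rewrite negbK.
have cop : coprimep p (char_poly B).
  rewrite coprimep_sym irreducible_poly_coprime //; apply/negP => /(dvdp_leq p0).
  by rewrite size_char_poly leqNgt ltnS sp.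
by rewrite -(mulKmx (coprimep_char_poly_unitmx cop) v) pBv mulmx0.
Qed.

Hypothesis SI : strongly_independent_tuple (fun i : 'I_n.+1 => B ^+ i).

Lemma size_char_poly_le_annihilator (v : 'cV[F]_n.+1) (p : {poly F}) :
  v != 0 -> p != 0 -> horner_mx B p *m v = 0 -> (size (char_poly B) <= size p)%N.
Proof.
move=> v0 p0 pBv; rewrite size_char_poly ltnNge; apply: contra p0 => sp.
by rewrite (strongly_independent_powersP.1 SI v v0 p sp pBv).
Qed.

Lemma strongly_independent_char_poly_irreducible : irreducible_poly (char_poly B).
Proof.
have chi0 : char_poly B != 0 by apply/monic_neq0/char_poly_monic.
split=> [|q sq1 qdvd]; first by rewrite size_char_poly.
have q0 : q != 0 by apply: contraTneq qdvd => ->; rewrite dvd0p.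
rewrite -dvdp_size_eqp // eqn_leq dvdp_leq //=.
set r := char_poly B %/ q.
have chiE : r * q = char_poly B by rewrite divpK.
have r0 : r != 0 by apply: contra_neq chi0 => r0; rewrite -chiE r0 mul0r.
have [qB0 | /exists_mulmx_neq0 [v qBv0]] := eqVneq (horner_mx B q) 0.
  have [v] := exists_mulmx_neq0 (oner_neq0 'M[F]_n.+1).
  rewrite mul1mx => v0.
  by apply: (size_char_poly_le_annihilator v0 q0); rewrite qB0 mul0mx.
suff: (size (char_poly B) <= size r)%N.
  rewrite -chiE (size_mul r0 q0); move: q0 sq1; rewrite -size_poly_gt0.
  move: (size r) (size q) => sr sq; lia.
apply: (size_char_poly_le_annihilator qBv0 r0).
by rewrite mulmxA mulmxE -rmorphM /= chiE Cayley_Hamilton mul0mx.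
Qed.

End StronglyIndependentPowers.

(* n.+1 encodes n >= 1 *)
Theorem theorem1p5 (F : fieldType) (n : nat) (B : 'M[F]_n.+1) :
  B != 0 ->
  (strongly_independent_mx B <-> irreducible_poly (char_poly B)).
Proof.
move=> B0; split=> [[_ SI] | irr].
  exact: strongly_independent_char_poly_irreducible SI.
by split; last exact: irreducible_char_poly_strongly_independent.
Qed.
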